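(* Let $n\ge 2$, let $A\in\mathrm{Mat}_{n\times n}(\mathbb{R})$, and let $X_A$ be the replicator vector field with payoff matrix $A$. Suppose $q=(q_1,\dots,q_n)\in\mathbb{R}^n$ is a formal equilibrium of $X_A$. Let $B=-EAE^t$, let $\eta_q:\mathbb{R}^{n-1}\to\mathbb{R}^{n-1}$ be given by $\eta_q(u)_i=q_i-\frac{e^{u_i}}{1+\sum_{j=1}^{n-1}e^{u_j}}$, and let $\tilde X_B(u)=B\,\eta_q(u)$ on $\mathbb{R}^{n-1}$. Suppose there exists a matrix $D=(d_{ij})\in\mathrm{Mat}_{(n-1)\times(n-1)}(\mathbb{R})$ such that (1) $DB$ is anti-symmetric, and (2) the 1-form $\big(1+\sum_{i=1}^{n-1}e^{u_i}\big)D^t\eta_q(u)$ on $\mathbb{R}^{n-1}$ is closed, i.e. the matrix $D^tQ_1$ is diagonal, where $Q_1$ is the $(n-1)\times(n-1)$ matrix with entries $(Q_1)_{ij}=q_i-\delta_{ij}$. Then the function $$H_D(u)=\sum_{i=1}^{n-1}\Big(\sum_{k=1}^{n-1}d_{ki}q_k\Big)u_i+\sum_{i=1}^{n-1}\Big(\Big(\sum_{k=1}^{n-1}d_{ki}q_k\Big)-d_{ii}\Big)e^{u_i}$$ is a constant of motion of $\tilde X_B$ on $\mathbb{R}^{n-1}$, and consequently the function $$H_D\circ\phi^{-1}(x)=\sum_{i=1}^{n-1}\Big(\sum_{k=1}^{n-1}d_{ki}q_k\Big)\log\Big(\frac{x_i}{x_n}\Big)+\sum_{i=1}^{n-1}\Big(\Big(\sum_{k=1}^{n-1}d_{ki}q_k\Big)-d_{ii}\Big)\frac{x_i}{x_n}$$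 is a constant of motion of $X_A$ on the interior of the simplex $\Delta^{n-1}$.
   Context: $\Delta^{n-1}=\{x\in\mathbb{R}^n: x_i\ge 0,\ \sum_i x_i=1\}$. The replicator vector field with payoff matrix $A$ is $X_A(x)_i=x_i\big((Ax)_i-x^tAx\big)$, $1\le i\le n$, on $\Delta^{n-1}$. A formal equilibrium of $X_A$ is a point $q\in\mathbb{R}^n$ with $\sum_{i=1}^n q_i=1$ and $(Aq)_i=(Aq)_j$ for all $i,j$. $E$ is the $(n-1)\times n$ matrix $E=[-I_{n-1}\mid \mathbb{1}]$ (row $i$ has $-1$ in column $i$, $1$ in column $n$, zeros elsewhere). $\phi:\mathbb{R}^{n-1}\to(\Delta^{n-1})^\circ$ is the diffeomorphism $\phi(u)=\big(\frac{e^{u_1}}{1+\sum_j e^{u_j}},\dots,\frac{e^{u_{n-1}}}{1+\sum_j e^{u_j}},\frac{1}{1+\sum_j e^{u_j}}\big)$, with inverse $\phi^{-1}(x)=(\log(x_1/x_n),\dots,\log(x_{n-1}/x_n))$; $\tilde X_B$ is the pullback of $X_A|_{(\Delta^{n-1})^\circ}$ by $\phi$. A constant of motion of a vector field is a function constant along its integral curves. *)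

From HB Require Import structures.
From mathcomp Require Import all_boot all_order all_algebra.
From mathcomp Require Import all_classical all_reals all_analysis.
Set Implicit Arguments. Unset Strict Implicit. Unset Printing Implicit Defensive.
Import Order.TTheory GRing.Theory Num.Theory.
Import numFieldNormedType.Exports.
Local Open Scope classical_set_scope.
Local Open Scope ring_scope.

Section Defs.
Variable R : realType.

(* Throughout, the ambient dimension is n = m.+1 (so n >= 2 iff 1 <= m), and
   R^n vectors are column vectors 'cV[R]_(m.+1); R^(n-1) is 'cV[R]_m.
   The coordinate x_n is x ord_max, and x_i (i < n-1) is x (widen i). *)

Definition widen {m : nat} (i : 'I_m) : 'I_m.+1 := widen_ord (leqnSn m) i.

Definition Emx (m : nat) : 'M[R]_(m, m.+1) := 
  \matrix_(i, j) (if j == ord_max then 1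
                  else if j == widen i then -1 else 0).

Definition replicator {n : nat} (A : 'M[R]_n) (x : 'cV[R]_n) : 'cV[R]_n :=
  \col_i (x i 0 * ((A *m x) i 0 - (x^T *m A *m x) 0 0)).

Definition formal_equilibrium {n : nat} (A : 'M[R]_n) (q : 'cV[R]_n) : Prop :=
  \sum_i q i 0 = 1 /\ forall i j, (A *m q) i 0 = (A *m q) j 0.

Definition eta_q {m : nat} (q : 'cV[R]_m.+1) (u : 'cV[R]_m) : 'cV[R]_m :=
  \col_i (q (widen i) 0 - expR (u i 0) / (1 + \sum_j expR (u j 0))).

Definition Q1 {m : nat} (q : 'cV[R]_m.+1) : 'M[R]_m :=
  \matrix_(i, j) (q (widen i) 0 - (i == j)%:R).

Definition simplex_interior (n : nat) : set 'cV[R]_n :=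
  [set x | (forall i, 0 < x i 0) /\ \sum_i x i 0 = 1].

Definition integral_curve {k : nat} (X : 'cV[R]_k -> 'cV[R]_k) (I : set R)
  (g : R -> 'cV[R]_k) : Prop :=
  forall t, I t -> forall i, is_derive t 1 (fun s => g s i 0) (X (g t) i 0).

Definition constant_of_motion {k : nat} (X : 'cV[R]_k -> 'cV[R]_k)
  (U : set 'cV[R]_k) (H : 'cV[R]_k -> R) : Prop :=
  forall (I : set R) (g : R -> 'cV[R]_k),
    open I -> is_interval I -> (forall t, I t -> U (g t)) ->
    integral_curve X I g ->
    forall s t, I s -> I t -> H (g s) = H (g t).

End Defs.

From HB Require Import structures.
From mathcomp Require Import all_boot all_order all_algebra.
From mathcomp Require Import all_classical all_reals all_analysis.
From mathcomp Require Import ring.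
Set Implicit Arguments. Unset Strict Implicit. Unset Printing Implicit Defensive.
Import Order.TTheory GRing.Theory Num.Theory.
Import numFieldNormedType.Exports.
Local Open Scope classical_set_scope.
Local Open Scope ring_scope.

(** Hypothesis (2) says exactly that the gradient of [H_D] at [u] is
   [S(u) D^t eta_q(u)], where [S(u) = 1 + sum_j e^{u_j}]; along the field
   [B eta_q] the derivative of [H_D] is therefore [S(u) eta^t (DB) eta], which
   vanishes because [DB] is antisymmetric.  In the chart
   [u = phi^{-1}(x) = (log (x_i / x_n))_i] one has [eta_q(u)_i = q_i - x_i], and
   since [Aq] has equal entries, [B eta_q(u)_i = (Ax)_i - (Ax)_n], which is the
   time derivative of [log (x_i / x_n)] along [X_A]; hence [phi^{-1}] maps
   integral curves of [X_A] to integral curves of [B eta_q], and [H_D o phi^{-1}]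
   is conserved as well. *)

Section Calculus.
Variable R : realType.

Lemma is_derive_sumr n (h : 'I_n -> R -> R) (dh : 'I_n -> R) (t : R) :
  (forall i, is_derive t 1 (h i) (dh i)) ->
  is_derive t 1 (fun s => \sum_(i < n) h i s) (\sum_(i < n) dh i).
Proof.
move=> hd; rewrite -[X in is_derive _ _ X _]fct_sumE.
exact: is_derive_sum.
Qed.

Lemma derive0_constant_on_interval (I : set R) (f : R -> R) :
  is_interval I -> (forall t, I t -> is_derive t 1 f 0) ->
  forall s t, I s -> I t -> f s = f t.
Proof.
move=> iI df.
suff le_eq s t : I s -> I t -> s <= t -> f s = f t.
  by move=> s t Is It; case: (leP s t) => [|/ltW] st; [|apply/esym]; exact: le_eq.
move=> Is It st.
have sub z : z \in `[s, t] -> I z.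
  by rewrite in_itv /= => /andP[sz zt]; apply: (iI s t) => //; rewrite sz zt.
have df_in x : x \in `]s, t[ -> is_derive x 1 f (cst 0 x).
  by rewrite in_itv /= => /andP[sx xt]; apply/df/sub; rewrite in_itv /= !ltW.
have cf : {within `[s, t], continuous f}.
  apply: continuous_in_subspaceT => x; rewrite inE => /sub/df [dv _].
  exact/differentiable_continuous/derivable1_diffP.
have [c _] := MVT_segment st df_in cf.
by rewrite mul0r => /eqP; rewrite subr_eq0 => /eqP.
Qed.

Lemma is_derive_ln_ratio (f g : R -> R) (df dg t : R) :
  0 < f t -> 0 < g t -> is_derive t 1 f df -> is_derive t 1 g dg ->
  is_derive t 1 (fun s => ln (f s / g s)) (df / f t - dg / g t).
Proof.
move=> f_gt0 g_gt0 fd gd.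
have fg_gt0 : 0 < f t / g t by rewrite divr_gt0.
have fg_d := is_deriveM fd (is_deriveV (lt0r_neq0 g_gt0) gd).
have ln_fg_d := @is_derive1_comp R (@ln R) _ t _ _ (is_derive1_ln fg_gt0) fg_d.
suff -> : df / f t - dg / g t
          = (f t / g t)^-1 * (f t * (- g t ^- 2 * dg) + (g t)^-1 * df) by [].
by field; rewrite !lt0r_neq0.
Qed.

Lemma constant_of_motion_derive0 k (X : 'cV[R]_k -> 'cV[R]_k)
    (U : set 'cV[R]_k) (H : 'cV[R]_k -> R) :
  (forall (g : R -> 'cV[R]_k) t, U (g t) ->
     (forall i, is_derive t 1 (fun s => g s i 0) (X (g t) i 0)) ->
     is_derive t 1 (H \o g) 0) ->
  constant_of_motion X U H.
Proof.
move=> dH I g _ iI gU ic s t Is It.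
apply: (@derive0_constant_on_interval I (H \o g) iI) => // r Ir.
by apply: dH; [exact: gU|exact: ic].
Qed.

Lemma constant_of_motion_pullback k l (X : 'cV[R]_k -> 'cV[R]_k)
    (Y : 'cV[R]_l -> 'cV[R]_l) (U : set 'cV[R]_k) (V : set 'cV[R]_l)
    (f : 'cV[R]_k -> 'cV[R]_l) (H : 'cV[R]_l -> R) (G : 'cV[R]_k -> R) :
  constant_of_motion Y V H ->
  (forall x, U x -> V (f x)) ->
  (forall x, U x -> G x = H (f x)) ->
  (forall I g, (forall t, I t -> U (g t)) -> integral_curve X I g ->
     integral_curve Y I (f \o g)) ->
  constant_of_motion X U G.
Proof.
move=> HY fUV GH fX I g oI iI gU ic s t Is It.
rewrite (GH _ (gU _ Is)) (GH _ (gU _ It)).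
by apply: (HY I (f \o g)) => // [r Ir|]; [apply/fUV/gU | exact: fX].
Qed.

End Calculus.

Lemma quad_form_antisym (R : numDomainType) m (M : 'M[R]_m) (v : 'cV[R]_m) :
  M^T = - M -> (v^T *m M *m v) 0 0 = 0.
Proof.
move=> M_antisym; set x := _ 0 0.
have xN : x = - x.
  have xT : (v^T *m M *m v)^T 0 0 = x by rewrite mxE.
  by rewrite -[in LHS]xT !trmx_mul trmxK M_antisym mulNmx mulmxN mulmxA mxE.
have : x *+ 2 == 0 by rewrite mulr2n {1}xN addNr.
by rewrite mulrn_eq0 => /eqP.
Qed.

Lemma dot_trmx_mul (R : comPzRingType) m (M N : 'M[R]_m) (v : 'cV[R]_m) :
  \sum_i (M^T *m v) i 0 * (N *m v) i 0 = (v^T *m (M *m N) *m v) 0 0.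
Proof.
have -> : v^T *m (M *m N) *m v = (M^T *m v)^T *m (N *m v).
  by rewrite trmx_mul trmxK !mulmxA.
by rewrite [RHS]mxE; apply: eq_bigr => i _; rewrite [in RHS]mxE.
Qed.

Section ReducedField.
Variables (R : realType) (m : nat) (q : 'cV[R]_m.+1) (D : 'M[R]_m).

Definition HD_coef (i : 'I_m) : R := \sum_(k < m) D k i * q (widen k) 0.

Definition HD (u : 'cV[R]_m) : R :=
  \sum_(i < m) HD_coef i * u i 0
  + \sum_(i < m) (HD_coef i - D i i) * expR (u i 0).

Lemma is_derive_HD (g : R -> 'cV[R]_m) (dg : 'I_m -> R) (t : R) :
  (forall i, is_derive t 1 (fun s => g s i 0) (dg i)) ->
  is_derive t 1 (HD \o g)
    (\sum_i (HD_coef i + (HD_coef i - D i i) * expR (g t i 0)) * dg i).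
Proof.
move=> gd; apply: is_derive_eq.
  by apply: is_deriveD; apply: is_derive_sumr => i; apply: is_deriveZ.
by rewrite -big_split; apply: eq_bigr => i _ /=; rewrite -![_ *: _]/(_ * _); ring.
Qed.

Hypothesis DtQ1_diag : is_diag_mx (D^T *m Q1 q).

Lemma offdiag_eq_HD_coef i k : k != i -> D k i = HD_coef i.
Proof.
move=> ki; move/is_diag_mxP/(_ i k): DtQ1_diag.
rewrite eq_sym ki mxE => /(_ isT).
under eq_bigr => j _ do rewrite !mxE mulrBr.
rewrite sumrB [X in _ - X](bigD1 k) //= [X in _ - (_ + X)]big1 => [|j /negPf->];
  last by rewrite mulr0.
by rewrite eqxx mulr1 addr0 => /eqP; rewrite subr_eq0 => /eqP <-.
Qed.

Lemma HD_gradient (u : 'cV[R]_m) i :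
  HD_coef i + (HD_coef i - D i i) * expR (u i 0)
  = (1 + \sum_j expR (u j 0)) * (D^T *m eta_q q u) i 0.
Proof.
set S := 1 + \sum_j expR (u j 0).
have S_neq0 : S != 0.
  by rewrite gt_eqF // ltr_pwDl // sumr_ge0 // => k _; exact/ltW/expR_gt0.
have De : \sum_k D k i * expR (u k 0)
          = D i i * expR (u i 0) + HD_coef i * (S - 1 - expR (u i 0)).
  have -> : S - 1 - expR (u i 0) = \sum_(k | k != i) expR (u k 0).
    by rewrite /S (bigD1 i) //=; ring.
  rewrite (bigD1 i) //= big_distrr /=; congr (_ + _).
  by apply: eq_bigr => k ki; rewrite offdiag_eq_HD_coef.
rewrite mxE; under eq_bigr => k _ do rewrite !mxE mulrBr mulrA.
rewrite sumrB -big_distrl /= -/S De -/(HD_coef i).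
by field.
Qed.

Lemma HD_constant_of_motion (B : 'M[R]_m) :
  (D *m B)^T = - (D *m B) ->
  constant_of_motion (fun u : 'cV[R]_m => B *m eta_q q u) setT HD.
Proof.
move=> DB_antisym; apply: constant_of_motion_derive0 => g t _ gd.
apply: is_derive_eq; first exact: is_derive_HD gd.
under eq_bigr => i _ do rewrite HD_gradient -mulrA.
by rewrite -big_distrr /= dot_trmx_mul quad_form_antisym ?mulr0.
Qed.

End ReducedField.

Lemma widen_neq_max m (i : 'I_m) : (widen i == ord_max) = false.
Proof. by apply/negbTE; rewrite -val_eqE /= neq_ltn ltn_ord. Qed.

Lemma widen_eq m (i j : 'I_m) : (widen i == widen j) = (i == j).
Proof. by rewrite -!val_eqE. Qed.

Section SimplexChart.
Variables (R : realType) (m : nat).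

Lemma Emx_mul (v : 'cV[R]_m.+1) i :
  (Emx R m *m v) i 0 = v ord_max 0 - v (widen i) 0.
Proof.
rewrite mxE big_ord_recr /= !mxE eqxx mul1r addrC; congr (_ + _).
rewrite (bigD1 i) //= big1 => [|j ji]; last first.
  by rewrite !mxE widen_neq_max widen_eq (negPf ji) mul0r.
by rewrite !mxE widen_neq_max eqxx addr0 mulN1r.
Qed.

Lemma trEmx_mul (v : 'cV[R]_m.+1) :
  \sum_j v j 0 = 0 -> (Emx R m)^T *m \col_i (- v (widen i) 0) = v.
Proof.
move=> v_sum0; apply/matrixP => j k; rewrite ord1 !mxE.
have [->|j_neq_max] := eqVneq j ord_max.
  under eq_bigr => i _ do rewrite !mxE eqxx mul1r.
  rewrite sumrN; move: v_sum0; rewrite big_ord_recr /= => /eqP.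
  by rewrite addrC addr_eq0 => /eqP ->.
have j_lt_m : (j < m)%N.
  by rewrite -ltnS ltn_neqAle ltn_ord andbT; move: j_neq_max; rewrite -val_eqE.
have -> : j = widen (Ordinal j_lt_m) by apply: val_inj.
rewrite (bigD1 (Ordinal j_lt_m)) //= big1 => [|i ij]; last first.
  by rewrite !mxE widen_neq_max widen_eq eq_sym (negPf ij) mul0r.
by rewrite !mxE widen_neq_max eqxx addr0 mulN1r opprK.
Qed.

(* The inverse [phi^{-1}] of the chart [phi] of the open simplex. *)
Definition simplex_chart (x : 'cV[R]_m.+1) : 'cV[R]_m :=
  \col_i ln (x (widen i) 0 / x ord_max 0).

Lemma expR_simplex_chart (x : 'cV[R]_m.+1) i :
  simplex_interior x -> expR (simplex_chart x i 0) = x (widen i) 0 / x ord_max 0.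
Proof. by move=> [x_gt0 _]; rewrite mxE lnK // posrE divr_gt0. Qed.

Lemma eta_q_simplex_chart (q x : 'cV[R]_m.+1) :
  simplex_interior x -> eta_q q (simplex_chart x) = \col_i (q - x) (widen i) 0.
Proof.
move=> x_int; have [x_gt0 x_sum1] := x_int.
have xn_neq0 : x ord_max 0 != 0 by rewrite gt_eqF.
have S_xn : (1 + \sum_j expR (simplex_chart x j 0)) * x ord_max 0 = 1.
  under eq_bigr => j _ do rewrite expR_simplex_chart //.
  rewrite mulrDl mul1r big_distrl /=.
  under eq_bigr => j _ do rewrite divfK //.
  by rewrite -x_sum1 big_ord_recr /= addrC.
apply/matrixP => i k; rewrite [LHS]mxE [RHS]mxE expR_simplex_chart // !mxE.
by rewrite -mulrA -invfM [_ * (1 + _)]mulrC S_xn invr1 mulr1.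
Qed.

Lemma reduced_field_simplex_chart (A : 'M[R]_m.+1) (q x : 'cV[R]_m.+1) i :
  formal_equilibrium A q -> simplex_interior x ->
  (- (Emx R m *m A *m (Emx R m)^T) *m eta_q q (simplex_chart x)) i 0
  = (A *m x) (widen i) 0 - (A *m x) ord_max 0.
Proof.
move=> [q_sum1 Aq_const] x_int; have [_ x_sum1] := x_int.
have xq_sum0 : \sum_j (x - q) j 0 = 0.
  by under eq_bigr => j _ do rewrite !mxE; rewrite sumrB x_sum1 q_sum1 subrr.
have -> : eta_q q (simplex_chart x) = \col_i (- (x - q) (widen i) 0).
  by rewrite eta_q_simplex_chart //; apply/matrixP => j k; rewrite !mxE opprB.
rewrite mulNmx -!mulmxA trEmx_mul // mxE Emx_mul mulmxBr !mxE.
have := Aq_const (widen i) ord_max; rewrite !mxE => ->.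
by ring.
Qed.

Lemma integral_curve_simplex_chart (A : 'M[R]_m.+1) (q : 'cV[R]_m.+1)
    (I : set R) (g : R -> 'cV[R]_m.+1) :
  formal_equilibrium A q -> (forall t, I t -> simplex_interior (g t)) ->
  integral_curve (replicator A) I g ->
  integral_curve (fun u => - (Emx R m *m A *m (Emx R m)^T) *m eta_q q u) I
    (simplex_chart \o g).
Proof.
move=> Aq g_int g_curve t It i; have [g_gt0 _] := g_int t It.
rewrite /= reduced_field_simplex_chart //; last exact: g_int.
under [X in is_derive _ _ X]funext => s do rewrite mxE.
apply: is_derive_eq.
  by apply: is_derive_ln_ratio; [| |exact: g_curve..].
by rewrite !mxE; field; rewrite !lt0r_neq0.
Qed.

End SimplexChart.

Theorem theorem3p1 (R : realType) (m : nat) (hm : (1 <= m)%N)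
  (A : 'M[R]_m.+1) (q : 'cV[R]_m.+1) (D : 'M[R]_m) :
  formal_equilibrium A q ->
  let B : 'M[R]_m := - (Emx R m *m A *m (Emx R m)^T) in
  (D *m B)^T = - (D *m B) ->
  is_diag_mx (D^T *m Q1 q) ->
  let c : 'I_m -> R := fun i => \sum_(k < m) D k i * q (widen k) 0 in
  constant_of_motion (fun u : 'cV[R]_m => B *m eta_q q u) setT
    (fun u => \sum_(i < m) c i * u i 0
              + \sum_(i < m) (c i - D i i) * expR (u i 0))
  /\
  constant_of_motion (replicator A) (@simplex_interior R m.+1)
    (fun x => \sum_(i < m) c i * ln (x (widen i) 0 / x ord_max 0)
              + \sum_(i < m) (c i - D i i) * (x (widen i) 0 / x ord_max 0)).
Proof.
move=> Aq B DB_antisym DtQ1_diag c.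
have HD_conserved := HD_constant_of_motion DtQ1_diag DB_antisym.
split; first exact: HD_conserved.
apply (constant_of_motion_pullback (f := @simplex_chart R m) HD_conserved) => // x x_int.
  rewrite /HD; congr (_ + _); apply: eq_bigr => i _; first by rewrite mxE.
  by rewrite expR_simplex_chart.
exact: integral_curve_simplex_chart.
Qed.
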